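(* There is an absolute constant $A \geq 1$ such that the following holds. Let $\mathbb{V} = \{(ay+b,y,t) : (y,t) \in \mathbb{R}^{2}\}$ with $a,b \in \mathbb{R}$ be a vertical plane, and define $\pi_{\mathbb{V}} \colon \mathbb{H} \to \mathbb{W}$ by $\pi_{\mathbb{V}}(x,y,t) = (y, t + \tfrac{1}{2}xy - \tfrac{1}{2}ay^{2} - by)$. Then $\pi_{\mathbb{V}}$ maps horizontal lines contained in $\mathbb{V}$ onto horizontal lines in $\mathbb{W}$, and $\pi_{\mathbb{V}}|_{\mathbb{V}} \colon (\mathbb{V},d) \to (\mathbb{W},d_{\mathrm{par}})$ is $A(1+|a|)$-bilipschitz.
   Context: $\mathbb{H}$ is $\mathbb{R}^{3}$ with group law $(x_{1},y_{1},t_{1}) \cdot (x_{2},y_{2},t_{2}) = (x_{1}+x_{2},y_{1}+y_{2},t_{1}+t_{2}+\tfrac{1}{2}(x_{1}y_{2}-x_{2}y_{1}))$ and metric $d(p,q) = \|q^{-1}\cdot p\|$ with $\|(x,y,t)\| = \max\{\sqrt{x^{2}+y^{2}},\sqrt{|t|}\}$. A horizontal line in $\mathbb{H}$ is a set $p \cdot \{(sa',sb',0) : s \in \mathbb{R}\}$ with $(a',b') \neq 0$. $\mathbb{W}$ is $\mathbb{R}^{2}$ with $d_{\mathrm{par}}((y,t),(\xi,\tau)) = \max\{|y-\xi|,|t-\tau|^{1/2}\}$; horizontal lines in $\mathbb{W}$ are the sets $\mathbb{R} \times \{t\}$. *)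

From Stdlib Require Import Reals.
Open Scope R_scope.

Definition Hpt : Type := (R * R * R)%type.

Definition hmul (p q : Hpt) : Hpt :=
  let '(x1, y1, t1) := p in
  let '(x2, y2, t2) := q in
  (x1 + x2, y1 + y2, t1 + t2 + / 2 * (x1 * y2 - x2 * y1)).

Definition hinv (p : Hpt) : Hpt :=
  let '(x, y, t) := p in (- x, - y, - t).

Definition hnorm (p : Hpt) : R :=
  let '(x, y, t) := p in Rmax (sqrt (x ^ 2 + y ^ 2)) (sqrt (Rabs t)).

Definition hdist (p q : Hpt) : R := hnorm (hmul (hinv q) p).

Definition dpar (u v : R * R) : R :=
  let '(y, t) := u in
  let '(xi, tau) := v in
  Rmax (Rabs (y - xi)) (sqrt (Rabs (t - tau))).

Definition horizontal_line_H (L : Hpt -> Prop) : Prop :=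
  exists (p : Hpt) (a' b' : R), (a' <> 0 \/ b' <> 0) /\
    forall q, L q <-> exists s : R, q = hmul p (s * a', s * b', 0).

Definition horizontal_line_W (L : R * R -> Prop) : Prop :=
  exists t : R, forall u, L u <-> snd u = t.

Definition vplane (a b : R) (p : Hpt) : Prop :=
  exists y t : R, p = (a * y + b, y, t).

Definition piV (a b : R) (p : Hpt) : R * R :=
  let '(x, y, t) := p in
  (y, t + / 2 * x * y - / 2 * a * y ^ 2 - b * y).

From Stdlib Require Import Reals Lra.
Open Scope R_scope.

(* Parametrize V by (y, t) |-> (a y + b, y, t).  Then pi_V(a y + b, y, t) = (y, t - b y / 2), and
   for two points of V the product q^-1 p is (a u, u, T), where u is the difference of the y's and
   T is exactly the difference of the second coordinates of their images.  So d and d_par only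
   differ in the horizontal part, sqrt(1 + a^2) |u| against |u|, and A = 1 works.  A horizontal
   line inside V has direction (a b', b') with b' <> 0, and along it the second coordinate of
   pi_V is constant, so its image is a full horizontal line of W. *)

Lemma Rdiv_le_of_le_mult (x y c : R) : 0 < c -> x <= c * y -> x / c <= y.
Proof.
  intros Hc Hx.
  rewrite <- (Rmult_div_r c y) by lra.
  apply Rmult_le_compat_r; [left; apply Rinv_0_lt_compat |]; lra.
Qed.

Lemma Rmax_l_le_scale (x y z c : R) :
  1 <= c -> 0 <= z -> x <= c * y -> Rmax x z <= c * Rmax y z.
Proof.
  intros Hc Hz Hx.
  pose proof (Rmax_l y z). pose proof (Rmax_r y z).
  apply Rmax_lub; nra.
Qed.

Lemma sqrt_sum_sq_bounds (v u : R) :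
  Rabs u <= sqrt (v ^ 2 + u ^ 2) <= Rabs v + Rabs u.
Proof.
  pose proof (Rabs_pos v). pose proof (Rabs_pos u).
  rewrite <- (pow2_abs v), <- (pow2_abs u).
  split.
  - rewrite <- (sqrt_pow2 (Rabs u)) at 1 by lra.
    apply sqrt_le_1_alt. nra.
  - rewrite <- (sqrt_pow2 (Rabs v + Rabs u)) by lra.
    apply sqrt_le_1_alt. nra.
Qed.

Lemma piV_vplane (a b y t : R) : piV a b (a * y + b, y, t) = (y, t - b * y / 2).
Proof. simpl. f_equal. field. Qed.

Lemma hdist_vplane (a b y1 t1 y2 t2 : R) :
  hdist (a * y1 + b, y1, t1) (a * y2 + b, y2, t2) =
  Rmax (sqrt ((a * (y1 - y2)) ^ 2 + (y1 - y2) ^ 2))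
       (sqrt (Rabs ((t1 - b * y1 / 2) - (t2 - b * y2 / 2)))).
Proof.
  unfold hdist, hnorm. simpl.
  f_equal; do 2 f_equal; field.
Qed.

Lemma piV_vplane_bilipschitz (a b : R) (p q : Hpt) :
  vplane a b p -> vplane a b q ->
  hdist p q / (1 + Rabs a) <= dpar (piV a b p) (piV a b q) /\
  dpar (piV a b p) (piV a b q) <= (1 + Rabs a) * hdist p q.
Proof.
  intros [y1 [t1 ->]] [y2 [t2 ->]].
  rewrite hdist_vplane, !piV_vplane. unfold dpar.
  set (u := y1 - y2).
  set (s := sqrt (Rabs ((t1 - b * y1 / 2) - (t2 - b * y2 / 2)))).
  assert (Hs : 0 <= s) by apply sqrt_pos.
  destruct (sqrt_sum_sq_bounds (a * u) u) as [Hlow Hup].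
  rewrite Rabs_mult in Hup.
  pose proof (Rabs_pos a). pose proof (Rabs_pos u).
  split.
  - apply Rdiv_le_of_le_mult; [lra |].
    apply Rmax_l_le_scale; nra.
  - apply Rmax_l_le_scale; nra.
Qed.

Lemma vplane_horizontal_direction (a b a' b' : R) (p : Hpt) :
  vplane a b p -> vplane a b (hmul p (a', b', 0)) -> a' = a * b'.
Proof.
  intros [y0 [t0 ->]] [y1 [t1 E]].
  simpl in E. injection E as Ex Ey _.
  rewrite <- Ey in Ex. lra.
Qed.

Lemma piV_vplane_horizontal (a b y0 t0 b' s : R) :
  piV a b (hmul (a * y0 + b, y0, t0) (s * (a * b'), s * b', 0)) = (y0 + s * b', t0 - b * y0 / 2).
Proof. simpl. f_equal; field. Qed.

Lemma hmul_0_r (p : Hpt) : hmul p (0, 0, 0) = p.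
Proof. destruct p as [[x y] t]. simpl. f_equal; [f_equal |]; ring. Qed.

Lemma piV_horizontal_line (a b : R) (L : Hpt -> Prop) :
  horizontal_line_H L -> (forall p, L p -> vplane a b p) ->
  horizontal_line_W (fun u => exists p, L p /\ piV a b p = u).
Proof.
  intros [p [a' [b' [Hdir HL]]]] HV.
  assert (HLs : forall s, L (hmul p (s * a', s * b', 0))) by (intro s; apply HL; eauto).
  assert (Vp : vplane a b p).
  { apply HV. specialize (HLs 0). rewrite !Rmult_0_l, hmul_0_r in HLs. exact HLs. }
  assert (Ha' : a' = a * b').
  { apply (vplane_horizontal_direction a b a' b' p Vp), HV.
    specialize (HLs 1). rewrite !Rmult_1_l in HLs. exact HLs. }
  assert (Hb' : b' <> 0) by (intro Hb; destruct Hdir; subst; lra).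
  destruct Vp as [y0 [t0 ->]]. subst a'.
  exists (t0 - b * y0 / 2). intros [y t]. split.
  - intros [q [Lq <-]]. apply HL in Lq as [s ->].
    rewrite piV_vplane_horizontal. reflexivity.
  - simpl. intros ->.
    exists (hmul (a * y0 + b, y0, t0) ((y - y0) / b' * (a * b'), (y - y0) / b' * b', 0)).
    split; [apply HLs |].
    rewrite piV_vplane_horizontal. f_equal. field. exact Hb'.
Qed.

Theorem lemma4p13 :
  exists A : R, 1 <= A /\
  forall a b : R,
    (forall L : Hpt -> Prop,
        horizontal_line_H L ->
        (forall p, L p -> vplane a b p) ->
        horizontal_line_W (fun u => exists p, L p /\ piV a b p = u)) /\
    (forall p q : Hpt, vplane a b p -> vplane a b q ->
        hdist p q / (A * (1 + Rabs a)) <= dpar (piV a b p) (piV a b q) /\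
        dpar (piV a b p) (piV a b q) <= A * (1 + Rabs a) * hdist p q).
Proof.
  exists 1. split; [lra |]. intros a b. split.
  - apply piV_horizontal_line.
  - intros p q Vp Vq. rewrite !Rmult_1_l.
    exact (piV_vplane_bilipschitz a b p q Vp Vq).
Qed.
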